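(* Let $S=\{\rho_1=0<\rho_2<\rho_3<\cdots\}\subseteq\mathbb{N}_0$ be an Arf numerical semigroup of genus $g$, and let $c=\rho_r$ be its conductor. Put $l_0=0$ and, for $i=1,\dots,r-1$, $l_i=r+\rho_{i+1}-2$. For a positive integer $l$ let $$d_{ORD}(l)=\min\{\#A[\rho]\ :\ \rho\in S,\ \rho\ge\rho_{l+1}\}.$$ Then for every positive integer $l$: (a) if $l_{i-1}<l\le l_i$ for some $i\in\{1,\dots,r-1\}$, then $d_{ORD}(l)=2i$; (b) if $l\ge l_{r-1}=c+r-2$, then $d_{ORD}(l)=l+1-g$.
   Context: A numerical semigroup is a submonoid $S$ of $(\mathbb{N}_0,+)$ with finite complement; its elements are listed increasingly as $\rho_1=0<\rho_2<\cdots$. The conductor $c$ is the smallest integer such that every integer $\ge c$ lies in $S$, and $r$ is the index with $c=\rho_r$. The genus $g=c-r+1$ is the number of elements of $\mathbb{N}_0\setminus S$. $S$ is an Arf semigroup if for all positive integers $i\ge j\ge k$ one has $\rho_i+\rho_j-\rho_k\in S$. For $\rho\in S$, $A[\rho]=\{p\in S:\ \rho-p\in S\}$. The quantity $d_{ORD}(l)$ is the order (Feng–Rao) bound on the minimum distance of the one-point algebraic geometry code $C_\Omega(\mathcal{P},\rho_lQ)$ when $S$ is the Weierstrass semigroup at $Q$. *)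

From mathcomp Require Import all_boot.
Set Implicit Arguments. Unset Strict Implicit. Unset Printing Implicit Defensive.

Definition numerical_semigroup (S : pred nat) : Prop :=
  [/\ S 0, (forall a b, S a -> S b -> S (a + b)) &
      exists N, forall n, N <= n -> S n].

(* rho lists the elements of S increasingly: rho 1 < rho 2 < ...  (index 0 unused) *)
Definition enumerates (S : pred nat) (rho : nat -> nat) : Prop :=
  (forall i, 0 < i -> rho i < rho i.+1) /\
  (forall x, S x <-> exists2 i, 0 < i & rho i = x).

Definition is_conductor (S : pred nat) (c : nat) : Prop :=
  (forall n, c <= n -> S n) /\
  (forall c', (forall n, c' <= n -> S n) -> c <= c').

(* genus: number of gaps (all gaps are < c when c is the conductor) *)
Definition genus (S : pred nat) (c : nat) : nat := \sum_(n < c) ~~ S n.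

Definition Arf (S : pred nat) (rho : nat -> nat) : Prop :=
  forall i j k, 0 < k -> k <= j -> j <= i -> S (rho i + rho j - rho k).

(* #A[x] = #{p in S : x - p in S}  (such p satisfy p <= x) *)
Definition A_card (S : pred nat) (x : nat) : nat :=
  \sum_(p < x.+1) (S p && S (x - p)).

Definition is_dORD (S : pred nat) (rho : nat -> nat) (l d : nat) : Prop :=
  (exists2 x, S x /\ rho l.+1 <= x & A_card S x = d) /\
  (forall x, S x -> rho l.+1 <= x -> d <= A_card S x).

Definition lseq (rho : nat -> nat) (r i : nat) : nat :=
  if i == 0 then 0 else r + rho i.+1 - 2.

(* Count #A[x] by splitting each decomposition x = p + (x - p), p and x - p in S,
   according to a threshold m: if x - p lies in S for every p in S below m, and no
   two elements of S below m sum to x, then #A[x] is twice the number of elements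
   of S below m plus the number of decompositions with both parts at least m.
   For m = rho_(i+1) and x = c - 1 + rho_(i+1) the Arf property forbids the second
   term, since c - 1 = rho_a + rho_b - rho_(i+1) is a gap; this gives the value 2i.
   The same splitting bounds #A[y] below by 2i once y >= c + rho_i, and for
   x >= 2c - 1 with m = c the second term is exactly x + 1 - 2c. *)
From mathcomp Require Import all_boot zify.
Set Implicit Arguments. Unset Strict Implicit.

Definition card_below (S : pred nat) (m : nat) : nat := \sum_(0 <= n < m) S n.

Lemma genus_add_card_below (S : pred nat) c : genus S c + card_below S c = c.
Proof.
rewrite /genus /card_below big_mkord -big_split /=.
rewrite (eq_bigr (fun=> 1)) ?sum1_card ?card_ord // => n _.
by case: (S n).
Qed.

Lemma A_card_nat (S : pred nat) x :
  A_card S x = \sum_(0 <= p < x.+1) (S p && S (x - p)).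
Proof. by rewrite /A_card big_mkord. Qed.

Section Splitting.

Variables (S : pred nat) (m x : nat).
Hypothesis m_le_Sx : m <= x.+1.

Lemma sum_low_mem :
  \sum_(0 <= p < x.+1) ((p < m) && S p) = card_below S m.
Proof.
rewrite /card_below (big_nat_widen _ _ _ _ _ m_le_Sx) [RHS]big_mkcond /=.
by apply: eq_bigr => p _; case: (p < m).
Qed.

Lemma sum_low_mem_compl :
  \sum_(0 <= p < x.+1) ((x - p < m) && S (x - p)) = card_below S m.
Proof.
rewrite -sum_low_mem [RHS]big_nat_rev /=.
by apply: eq_bigr => p _; rewrite add0n subSS.
Qed.

Hypothesis low_compl : forall p, p < m -> S p -> S (x - p).
Hypothesis no_low_pair : forall p, p < m -> x - p < m -> ~~ (S p && S (x - p)).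

Lemma A_card_split :
  A_card S x = 2 * card_below S m +
    \sum_(0 <= p < x.+1) [&& m <= p, m <= x - p, S p & S (x - p)].
Proof.
rewrite A_card_nat; transitivity (\sum_(0 <= p < x.+1)
  (((p < m) && S p) + ((x - p < m) && S (x - p)) +
   [&& m <= p, m <= x - p, S p & S (x - p)])).
  apply: eq_big_nat => p /andP[_ px].
  case: (ltnP p m) => pm; case: (ltnP (x - p) m) => qm /=.
  - case Sp: (S p); case Sq: (S (x - p)) => //.
    + by move: (no_low_pair pm qm); rewrite Sp Sq.
    + by move: (low_compl pm Sp); rewrite Sq.
    + by move: (low_compl qm Sq); rewrite subKn // Sp.
  - by case Sp: (S p); rewrite ?(low_compl pm Sp) ?addn0.
  - case Sq: (S (x - p)); rewrite ?andbF //.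
    by move: (low_compl qm Sq); rewrite subKn // => ->.
  - by [].
by rewrite !big_split /= sum_low_mem sum_low_mem_compl addnn mul2n.
Qed.

End Splitting.

Section Enumeration.

Variables (S : pred nat) (rho : nat -> nat).
Hypotheses (S0 : S 0) (enumS : enumerates S rho).

Let rho_mono : {in [pred k | 0 < k] &, {mono rho : i j / i <= j}}.
Proof.
apply: leq_mono_in; apply: homo_ltn_in ltn_trans _ _.
  by move=> i j _ _ k /andP[ik _]; rewrite inE (leq_ltn_trans (leq0n i) ik).
by move=> i i0 _; apply: enumS.1.
Qed.

Lemma leq_rho i j : 0 < i -> 0 < j -> (rho i <= rho j) = (i <= j).
Proof. exact: rho_mono. Qed.

Lemma ltn_rho i j : 0 < i -> 0 < j -> (rho i < rho j) = (i < j).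
Proof. by move=> i0 j0; rewrite !ltnNge leq_rho. Qed.

Lemma rho_mem i : 0 < i -> S (rho i).
Proof. by move=> i0; apply/enumS.2; exists i. Qed.

Lemma memS_rho p : S p -> exists2 i, 0 < i & rho i = p.
Proof. exact: (enumS.2 p).1. Qed.

Lemma rho1 : rho 1 = 0.
Proof.
have [i i0 rho_i] := memS_rho S0.
by apply/eqP; rewrite -leqn0 -[leqRHS]rho_i leq_rho.
Qed.

Lemma leq_rho_of_ltn k p : 0 < k -> S p -> p < rho k.+1 -> p <= rho k.
Proof.
move=> k0 /memS_rho[j j0 <-].
by rewrite ltn_rho // ltnS -leq_rho.
Qed.

Lemma card_below_rho k : 0 < k -> card_below S (rho k) = k.-1.
Proof.
elim: k => // [[_ _|k IHk _]]; first by rewrite rho1 /card_below big_geq.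
have lt_rho : rho k.+1 < rho k.+2 by rewrite ltn_rho.
rewrite /card_below (@big_cat_nat _ _ _ (rho k.+1)) ?(ltnW lt_rho) //=.
rewrite -/(card_below S _) IHk // big_ltn // rho_mem // big1_seq ?addn0 ?addn1 //.
move=> n /andP[_]; rewrite mem_index_iota => /andP[lo hi].
case Sn: (S n) => //.
by have := leq_rho_of_ltn (ltn0Sn k) Sn hi; rewrite leqNgt lo.
Qed.

Lemma two_mul_leq_A_card k y : 0 < k -> rho k.+1 <= y.+1 ->
  rho k + rho k < y -> (forall p, S p -> p <= rho k -> S (y - p)) ->
  2 * k <= A_card S y.
Proof.
move=> k0 rho_y y_gt low_compl.
rewrite (A_card_split (m := rho k.+1)) // ?card_below_rho ?leq_addr //.
  by move=> p pm Sp; apply: low_compl Sp (leq_rho_of_ltn k0 Sp pm).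
move=> p pm qm; apply/negP => /andP[Sp Sq].
by move: (leq_rho_of_ltn k0 Sp pm) (leq_rho_of_ltn k0 Sq qm); lia.
Qed.

Section Conductor.

Variables (c r : nat).
Hypotheses (condS : is_conductor S c) (r_gt0 : 0 < r) (rho_r : rho r = c).

Lemma conductor_gap : 0 < c -> ~~ S c.-1.
Proof.
move=> c0; apply/negP => Sc1.
suff : c <= c.-1 by rewrite leqNgt ltn_predL c0.
apply: condS.2 => n; rewrite leq_eqVlt => /orP[/eqP <- // | lt_n].
by apply: condS.1; lia.
Qed.

Lemma rho_addn k : rho (r + k) = c + k.
Proof.
elim: k => [|k IHk]; first by rewrite !addn0.
have rk0 : 0 < r + k := ltn_addr k r_gt0.
have [j j0 rho_j] := memS_rho (condS.1 (c + k.+1) (leq_addr _ _)).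
have lt_j : r + k < j by rewrite -(ltn_rho rk0 j0) rho_j IHk addnS.
have le_c : rho (r + k.+1) <= c + k.+1 by rewrite -rho_j leq_rho ?addnS.
have ge_c : c + k.+1 <= rho (r + k.+1) by rewrite !addnS -IHk ltn_rho.
by apply/eqP; rewrite eqn_leq le_c ge_c.
Qed.

Lemma leq_rho_conductor n k : 0 < n -> (rho n <= c + k) = (n <= r + k).
Proof. by move=> n0; rewrite -rho_addn leq_rho // ltn_addr. Qed.

Lemma conductor_leq_rho n k : 0 < n -> (c + k <= rho n) = (r + k <= n).
Proof. by move=> n0; rewrite -rho_addn leq_rho // ltn_addr. Qed.

Lemma card_below_conductor : card_below S c = r.-1.
Proof. by rewrite -rho_r card_below_rho. Qed.

Lemma A_card_above_conductor y : c + c <= y.+1 ->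
  A_card S y = 2 * r.-1 + (y.+1 - (c + c)).
Proof.
move=> cy; rewrite (A_card_split (m := c)) ?card_below_conductor; last first.
- by move=> p pc qc; exfalso; lia.
- by move=> p pc _; apply: condS.1; lia.
- lia.
congr (_ + _); transitivity (\sum_(0 <= p < y.+1) ((c <= p) && (p <= y - c))).
  apply: eq_big_nat => p /andP[_ py]; have -> : (p <= y - c) = (c <= y - p) by lia.
  case: (leqP c p) => //= cp; case: (leqP c (y - p)) => //= cq.
  by rewrite !condS.1.
have -> : \sum_(0 <= p < y.+1) ((c <= p) && (p <= y - c)) =
          \sum_(0 <= p < y.+1 | (true && (p < (y - c).+1)) && (c <= p)) 1.
  rewrite [RHS]big_mkcond; apply: eq_bigr => p _.
  by rewrite /= ltnS andbC; case: (c <= p <= y - c).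
rewrite -big_nat_widenl // -big_nat_widen ?sum_nat_const_nat; lia.
Qed.

Lemma A_card_Arf_witness i : Arf S rho -> 0 < i < r ->
  A_card S (c.-1 + rho i.+1) = 2 * i.
Proof.
move=> arf /andP[i0 ir]; set m := rho i.+1.
have m_le_c : m <= c by rewrite -rho_r leq_rho.
have m0 : 0 < m by rewrite -rho1 ltn_rho.
have gap := conductor_gap (leq_trans m0 m_le_c).
rewrite (A_card_split (m := m)) ?card_below_rho //; first last.
- by move=> p pm qm; exfalso; lia.
- by move=> p pm _; apply: condS.1; lia.
- lia.
rewrite big1 ?addn0 // => p _; case: and4P => //= -[mp mq].
move=> /memS_rho[a a0 rho_a] /memS_rho[b b0 rho_b].
have sum_gap : rho a + rho b - m = c.-1 by lia.
have ia : i.+1 <= a by rewrite -leq_rho // rho_a.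
have ib : i.+1 <= b by rewrite -leq_rho // rho_b.
suff : S c.-1 by rewrite (negbTE gap).
rewrite -sum_gap; case: (leqP a b) => ab.
  by rewrite addnC; apply: arf.
exact: arf (ltnW ab).
Qed.

Lemma two_mul_leq_A_card_tail i l y : 0 < i < r -> lseq rho r i.-1 < l ->
  S y -> rho l.+1 <= y -> 2 * i <= A_card S y.
Proof.
move=> /andP[i0 ir] lo Sy ly.
suff [] : [/\ rho i.+1 <= y.+1, rho i + rho i < y &
          forall p, S p -> p <= rho i -> S (y - p)] by apply: two_mul_leq_A_card.
have [i1|i2] := leqP i 1.
  (* l_0 = 0 does not follow the pattern r + rho_i - 2: only y \in S is known *)
  have i1_eq : i = 1 by lia.
  move: lo; rewrite i1_eq /lseq /= => l0.
  have rho2_y : rho 2 <= y by apply: leq_trans ly; rewrite leq_rho.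
  have rho2_gt0 : 0 < rho 2 by rewrite -rho1 ltn_rho.
  rewrite rho1; split; [lia | lia | move=> p Sp; rewrite leqn0 => /eqP ->].
  by rewrite subn0.
have lo_r : r + rho i <= l.+1.
  by move: lo; rewrite /lseq (_ : (i.-1 == 0) = false) ?prednK //; lia.
have rho_i_lt_c : rho i < c by rewrite -rho_r ltn_rho.
have m_le_c : rho i.+1 <= c by rewrite -rho_r leq_rho.
have cy : c + rho i <= y by apply: leq_trans ly; rewrite conductor_leq_rho.
split; [lia | lia | move=> p Sp pi; apply: condS.1; lia].
Qed.

Lemma is_dORD_Arf i l : Arf S rho -> 0 < i < r ->
  lseq rho r i.-1 < l <= lseq rho r i -> is_dORD S rho l (2 * i).
Proof.
move=> arf /[dup] i_range /andP[i0 ir] /andP[lo hi]; split; last first.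
  by move=> y Sy ly; apply: two_mul_leq_A_card_tail lo Sy ly.
exists (c.-1 + rho i.+1); last exact: A_card_Arf_witness arf i_range.
have m0 : 0 < rho i.+1 by rewrite -rho1 ltn_rho.
have m_le_c : rho i.+1 <= c by rewrite -rho_r leq_rho.
split; first by apply: condS.1; lia.
have -> : c.-1 + rho i.+1 = c + (rho i.+1).-1 by lia.
by move: hi; rewrite /lseq ifN ?lt0n_neq0 // leq_rho_conductor //; lia.
Qed.

Lemma is_dORD_above_conductor l : lseq rho r (r - 1) <= l ->
  is_dORD S rho l (l + 1 - genus S c).
Proof.
move=> hl; have genus_c := genus_add_card_below S c.
rewrite card_below_conductor in genus_c.
have [r_le_l c_le_l] : r <= l.+1 /\ c + r <= l + 2.
  move: hl; rewrite /lseq; case: eqP => [r1 _ | r1].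
    have r1_eq : r = 1 by lia.
    by move: rho_r; rewrite r1_eq rho1 => <-; lia.
  by rewrite subn1 prednK // rho_r; lia.
have rho_l : rho l.+1 = c + (l.+1 - r) by rewrite -rho_addn subnKC.
split.
  exists (rho l.+1); first by split; [apply: rho_mem |].
  by rewrite A_card_above_conductor rho_l; lia.
by move=> y _ ly; rewrite A_card_above_conductor; lia.
Qed.

End Conductor.

End Enumeration.

Theorem mainTheorem1 (S : pred nat) (rho : nat -> nat) (c r g : nat) :
  numerical_semigroup S -> enumerates S rho -> Arf S rho ->
  is_conductor S c -> 0 < r -> rho r = c -> g = genus S c ->
  forall l, 0 < l ->
    (forall i, 1 <= i <= r - 1 ->
       lseq rho r i.-1 < l <= lseq rho r i -> is_dORD S rho l (2 * i)) /\
    (lseq rho r (r - 1) <= l -> is_dORD S rho l (l + 1 - g)).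
Proof.
move=> [S0 _ _] enumS arf condS r0 rho_r -> l _; split.
  move=> i ir; apply: (is_dORD_Arf S0 enumS condS r0 rho_r arf); lia.
exact: (is_dORD_above_conductor S0 enumS condS r0 rho_r).
Qed.
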